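(* Let $n=n_1\cdots n_\ell>2$ with integers $n_i\ge2$ and $U=F_{(n_1,\dots,n_\ell)}$ (modes labelled as in the context). Let $\lambda\in[0,1]$ and $\Lambda=1-(1-\lambda)^{\log_2 n}$. In the lossy distillation protocol with input $\rho^{(n)}(\epsilon)$, the heralding rate satisfies $$h_n(\epsilon;\lambda)\ge(1-\Lambda)^{n-1}h_n(\epsilon)=(1-\lambda)^{(n-1)\log_2 n}\,h_n(\epsilon),$$ and for $\epsilon=0$ equality holds: $h_n(0;\lambda)=(1-\Lambda)^{n-1}h_n(0)=(1-\lambda)^{(n-1)\log_2n}h_n(0)$.
   Context: $F_m=\frac1{\sqrt m}(e^{2\pi ijk/m})_{j,k}$, $F_{(n_1,\dots,n_\ell)}=F_{n_1}\otimes\cdots\otimes F_{n_\ell}$, with $|m_1\rangle\otimes\cdots\otimes|m_\ell\rangle$ labelled as mode $m_1+n_1m_2+\cdots+(n_1\cdots n_{\ell-1})m_\ell$ (includes $F_n$ and $H_{2^r}=F_{(2,\dots,2)}$). Photons have external modes $0,\dots,n-1$ and internal states in a space with orthonormal basis $\{\xi_0,\xi_1,\dots\}$; $\hat U$ acts as $a_j^\dagger[\xi]\mapsto\sum_iU_{ij}a_i^\dagger[\xi]$. Ideal patterns: $(s_0,\dots,s_{n-1})$ with $\sum s_i=n$, $s_0=1$, $\langle s_0,\dots,s_{n-1}|\hat U|1,\dots,1\rangle\ne0$. Input $\rho^{(n)}(\epsilon)$: one photon per mode, the photon in mode $i$ independently having internal state $\xi_0$ with probability $1-\epsilon$, otherwise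 $\xi_j$ with probability $\epsilon/R$ for each $1\le j\le R$ (URS model, fixed $R\ge1$), or $\xi_{i+1}$ with probability $\epsilon$ (OBB limit). Lossless protocol: apply $\hat U$, count photons in modes $1,\dots,n-1$ as $(s_1,\dots,s_{n-1})$, set $s_0=n-\sum_{j\ge1}s_j$, herald iff $(s_0,\dots,s_{n-1})$ is ideal; $h_n(\epsilon)$ is the heralding probability. Lossy protocol: after $\hat U$, each photon is independently lost with probability $\Lambda$ (a loss channel on each mode); then photons in modes $1,\dots,n-1$ are counted as $(s_1,\dots,s_{n-1})$, and success is heralded iff $(1,s_1,\dots,s_{n-1})$ is an ideal pattern; $h_n(\epsilon;\lambda)$ is this heralding probability. *)

From HB Require Import structures.
From mathcomp Require Import all_boot all_order all_algebra all_fingroup.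
From mathcomp Require Import all_classical all_reals all_analysis.
From mathcomp Require Import complex.
Set Implicit Arguments. Unset Strict Implicit. Unset Printing Implicit Defensive.
Import Order.TTheory GRing.Theory Num.Theory.
Local Open Scope ring_scope.

Section Defs.
Variable R : realType.
Local Notation C := (complex R).

Definition sqmod (z : C) : R := complex.Re z ^+ 2 + complex.Im z ^+ 2.

Definition fourier (m j k : nat) : C :=
  let th := 2 * pi * (j * k)%:R / m%:R in
  Complex (cos th / Num.sqrt m%:R) (sin th / Num.sqrt m%:R).

(* r-th mixed-radix digit of the mode label j:
   j = m_1 + n_1 m_2 + ... + (n_1...n_{l-1}) m_l, digit r = m_{r+1} *)
Definition digit (ns : seq nat) (r j : nat) : nat :=
  (j %/ \prod_(x <- take r ns) x) %% nth 1%N ns r.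

(* entries of F_{(n_1,...,n_l)} = F_{n_1} (x) ... (x) F_{n_l} *)
Definition fourier_tensor (ns : seq nat) (j k : nat) : C :=
  \prod_(r < size ns) fourier (nth 1%N ns r) (digit ns r j) (digit ns r k).

Definition mode_seq (n : nat) (s : nat -> nat) : seq nat :=
  flatten [seq nseq (s i) i | i <- iota 0 n].

(* <s_0,...,s_{n-1}| U^ |1,...,1> = perm(U[d_s, :]) / sqrt(prod_i s_i!) *)
Definition fock_amp (U : nat -> nat -> C) (n : nat) (s : nat -> nat) : C :=
  (\sum_(sig : 'S_n) \prod_(k < n) U (nth 0%N (mode_seq n s) k) (sig k))
  / (real_complex R (Num.sqrt (\prod_(i < n) (s i)`!)%:R)).

Definition ideal (U : nat -> nat -> C) (n : nat) (s : nat -> nat) : Prop :=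
  (\sum_(i < n) s i)%N = n /\ s 0%N = 1%N /\ fock_amp U n s <> 0.

Inductive noise_model := URS of nat | OBB.

Definition nlabels (M : noise_model) (n : nat) : nat :=
  match M with URS r => r.+1 | OBB => n.+1 end.

(* probability that the photon in mode i has internal state xi_l *)
Definition label_prob (M : noise_model) (eps : R) (i l : nat) : R :=
  match M with
  | URS r => if l == 0%N then 1 - eps else if (l <= r)%N then eps / r%:R else 0
  | OBB => if l == 0%N then 1 - eps else if l == i.+1 then eps else 0
  end.

Definition config_prob (M : noise_model) (n : nat) (eps : R)
    (c : {ffun 'I_n -> 'I_(nlabels M n)}) : R :=
  \prod_(i < n) label_prob M eps i (c i).

(* First-quantized output amplitude after U^, for input internal labels c:
   psi(o,t) = (1/sqrt n!) sum_pi prod_k U_{o_k, pi k} <xi_{t_k} | xi_{c_{pi k}}>,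
   o_k = external mode, t_k = internal label of the k-th particle slot. *)
Definition out_amp (U : nat -> nat -> C) (K n : nat) (c : {ffun 'I_n -> 'I_K})
    (o : {ffun 'I_n -> 'I_n}) (t : {ffun 'I_n -> 'I_K}) : C :=
  (\sum_(p : 'S_n) \prod_(k < n)
      (U (o k) (p k) * (if t k == c (p k) then 1 else 0)))
  / (real_complex R (Num.sqrt (n`!)%:R)).

Definition count (n : nat) (o : {ffun 'I_n -> 'I_n}) (j : nat) : nat :=
  #|[set k : 'I_n | nat_of_ord (o k) == j]|.

(* photons detected in mode j that were not lost (b k = lost) *)
Definition count_lossy (n : nat) (o : {ffun 'I_n -> 'I_n}) (b : {ffun 'I_n -> bool})
    (j : nat) : nat :=
  #|[set k : 'I_n | (nat_of_ord (o k) == j) && ~~ b k]|.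

Definition lossless_pattern (n : nat) (o : {ffun 'I_n -> 'I_n}) (j : nat) : nat :=
  if j == 0%N then (n - \sum_(1 <= j' < n) count o j')%N else count o j.

Definition lossy_pattern (n : nat) (o : {ffun 'I_n -> 'I_n}) (b : {ffun 'I_n -> bool})
    (j : nat) : nat :=
  if j == 0%N then 1%N else count_lossy o b j.

Definition indicator (P : Prop) : R := if `[< P >] then 1 else 0.

Definition herald_lossless (M : noise_model) (U : nat -> nat -> C) (n : nat)
    (eps : R) : R :=
  \sum_(c : {ffun 'I_n -> 'I_(nlabels M n)}) @config_prob M n eps c *
   \sum_(o : {ffun 'I_n -> 'I_n}) \sum_(t : {ffun 'I_n -> 'I_(nlabels M n)})
     sqmod (out_amp U c o t) * indicator (ideal U n (lossless_pattern o)).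

Definition herald_lossy (M : noise_model) (U : nat -> nat -> C) (n : nat)
    (eps Lam : R) : R :=
  \sum_(c : {ffun 'I_n -> 'I_(nlabels M n)}) @config_prob M n eps c *
   \sum_(o : {ffun 'I_n -> 'I_n}) \sum_(t : {ffun 'I_n -> 'I_(nlabels M n)})
     sqmod (out_amp U c o t) *
     \sum_(b : {ffun 'I_n -> bool})
        (\prod_(k < n) (if b k then Lam else 1 - Lam)) *
        indicator (ideal U n (lossy_pattern o b)).

Definition log2 (x : R) : R := ln x / ln 2.

End Defs.

From Pilot Require Import Defs.
From HB Require Import structures.
From mathcomp Require Import all_boot all_order all_algebra all_fingroup.
From mathcomp Require Import all_classical all_reals all_analysis.
From mathcomp Require Import complex.
From mathcomp Require Import ring lra zify.
Set Implicit Arguments. Unset Strict Implicit. Unset Printing Implicit Defensive.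
Import Order.TTheory GRing.Theory Num.Theory.
Local Open Scope ring_scope.

(* A detection heralded by the lossless protocol has exactly n - 1 photons outside mode 0;
   after losses it is still heralded, with the same pattern, whenever none of these n - 1
   photons is lost, which happens with probability (1 - Lam)^(n-1).  Averaging over the
   outputs gives h_n(eps; lambda) >= (1 - Lam)^(n-1) h_n(eps).
   At eps = 0 only the pure input contributes, and for it the suppression law of
   F_(n_1,...,n_l) excludes every other heralded lossy event.  Cyclically shifting the r-th
   mixed-radix digit of the column index multiplies row j of U by exp(2 pi i d_r(j) / n_r),
   so a nonzero permanent of the rows o_1, ..., o_n forces n_r | sum_k d_r(o_k) for every r.
   If a photon detected in mode o_k1 <> 0 were lost and the lossy pattern still heralded,
   the heralded modes would be the o_k with k <> k1; comparing the two divisibilities makes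
   every digit of o_k1 vanish, i.e. o_k1 = 0. *)

Section RootsOfUnity.
Variable R : realType.
Local Notation C := (complex R).

Definition expi (x : R) : C := Complex (cos x) (sin x).

Lemma expiD x y : expi (x + y) = expi x * expi y.
Proof. by rewrite /expi cosD sinD; congr Complex; ring. Qed.

Lemma cos_eq1_0_2pi (x : R) : 0 <= x < pi *+ 2 -> cos x = 1 -> x = 0.
Proof.
move=> /andP[x_ge0 x_lt2pi] cos1.
have sin_half0 : sin (x / 2) ^+ 2 = 0.
  have x_double : x = (x / 2) *+ 2 by rewrite -mulr_natr mulfVK // pnatr_eq0.
  by move: cos1; rewrite {1}x_double cos_mulr2n sin2cos2 => h; lra.
have [->|x_neq0] := eqVneq x 0 => //; exfalso.
have : 0 < sin (x / 2).
  apply: sin_gt0_pi; rewrite divr_gt0 ?lt_def ?x_neq0 //=; move: x_lt2pi; rewrite mulr2n; lra.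
by move/eqP: sin_half0; rewrite expf_eq0 /= => /eqP->; rewrite ltxx.
Qed.

Definition expi_frac (N m : nat) : C := expi (2 * pi * m%:R / N%:R).

Lemma expi_frac0 N : expi_frac N 0 = 1.
Proof. by rewrite /expi_frac mulr0 mul0r /expi cos0 sin0. Qed.

Lemma expi_fracD N m m' : expi_frac N (m + m') = expi_frac N m * expi_frac N m'.
Proof. by rewrite /expi_frac -expiD natrD mulrDr mulrDl. Qed.

Lemma expi_frac_sum N I (r : seq I) (P : pred I) (F : I -> nat) :
  \prod_(i <- r | P i) expi_frac N (F i) = expi_frac N (\sum_(i <- r | P i) F i).
Proof. by rewrite (big_morph _ (expi_fracD N) (expi_frac0 N)). Qed.

Lemma expi_fracMl N q : (0 < N)%N -> expi_frac N (q * N) = 1.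
Proof.
move=> N_gt0; rewrite /expi_frac natrM -mulrA mulfK ?pnatr_eq0 -?lt0n //.
have -> : 2 * pi * q%:R = 0 + pi *+ 2 *+ q :> R by rewrite add0r mulr_natl mulr_natr.
by rewrite /expi (periodicn (@cosD2pi R)) (periodicn (@sinD2pi R)) cos0 sin0.
Qed.

Lemma expi_frac_mod N m : (0 < N)%N -> expi_frac N (m %% N) = expi_frac N m.
Proof.
by move=> N_gt0; rewrite {2}(divn_eq m N) expi_fracD expi_fracMl // mul1r.
Qed.

Lemma expi_frac_eq1 N m : (0 < N)%N -> expi_frac N m = 1 -> (N %| m)%N.
Proof.
move=> N_gt0; rewrite -expi_frac_mod // /dvdn => -[cos1 _].
have N_neq0 : (N%:R : R) != 0 by rewrite pnatr_eq0 -lt0n.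
suff : 2 * pi * (m %% N)%:R / N%:R = 0 :> R.
  move/eqP; rewrite mulf_eq0 invr_eq0 (negbTE N_neq0) orbF mulf_eq0 pnatr_eq0.
  by rewrite mulf_eq0 (gt_eqF (pi_gt0 R)) pnatr_eq0.
apply: cos_eq1_0_2pi cos1; have pi_gt0 := pi_gt0 R.
have frac_lt1 : (m %% N)%:R / N%:R < 1 :> R.
  by rewrite ltr_pdivrMr ?ltr0n // mul1r ltr_nat ltn_mod.
rewrite -mulrA mulr2n mulr_ge0 ?divr_ge0 ?mulr_ge0 ?(ltW pi_gt0) //=.
by rewrite mulrDl mul1r; nra.
Qed.

Lemma fourierE m j k :
  fourier R m j k = expi_frac m (j * k) * real_complex R (Num.sqrt m%:R)^-1.
Proof. by rewrite /fourier /expi_frac /expi; congr Complex; simpl; ring. Qed.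

Lemma fourier_succ_mod N j k : (0 < N)%N ->
  fourier R N j (k.+1 %% N) = fourier R N j k * expi_frac N j.
Proof.
move=> N_gt0; rewrite !fourierE -expi_frac_mod // modnMmr expi_frac_mod //.
by rewrite mulnSr expi_fracD mulrAC.
Qed.

End RootsOfUnity.

Definition rows_permanent (T : comPzRingType) (U : nat -> nat -> T) n (f : 'I_n -> nat)
    : T :=
  \sum_(p : 'S_n) \prod_(k < n) U (f k) (p k).

Lemma rows_permanent_twist (F : idomainType) (U : nat -> nat -> F) n (f : 'I_n -> nat)
    (g : 'S_n) (w : 'I_n -> F) :
  (forall k j, U (f k) (g j) = U (f k) j * w k) ->
  rows_permanent U f != 0 -> \prod_(k < n) w k = 1.
Proof.
move=> Ug perm_neq0; apply: (mulfI perm_neq0); rewrite mulr1 {2}/rows_permanent.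
rewrite (reindex_inj (mulIg g)) mulr_suml; apply: eq_bigr => p _.
by rewrite -big_split; apply: eq_bigr => k _; rewrite permM Ug.
Qed.

Section MixedRadix.
Local Open Scope nat_scope.
Variable ns : seq nat.
Hypothesis ns_ge2 : all (fun m => 2 <= m) ns.
Local Notation n := (\prod_(m <- ns) m).

Definition place_value r := \prod_(x <- take r ns) x.
(* Past the last position the radix is 1, so the lemmas below hold for every r. *)
Definition radix r := nth 1 ns r.
Local Notation P := place_value.
Local Notation N := radix.
Local Notation digit := (digit ns).

Lemma radix_gt0 r : 0 < N r.
Proof.
case: (ltnP r (size ns)) => [r_lt|r_ge]; last by rewrite /radix nth_default.
by move/(all_nthP 1): ns_ge2 => /(_ r r_lt); apply: leq_trans.
Qed.

Lemma place_value_gt0 r : 0 < P r.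
Proof.
rewrite /P big_seq prodn_cond_gt0 // => x /mem_take x_in.
by move/allP: ns_ge2 => /(_ x x_in); apply: leq_trans.
Qed.

Lemma place_valueS r : P r.+1 = P r * N r.
Proof.
case: (ltnP r (size ns)) => [r_lt|r_ge].
  by rewrite /P (take_nth 1 r_lt) -cats1 big_cat big_seq1.
by rewrite /P /radix nth_default // !take_oversize ?muln1 //; apply: leqW.
Qed.

Lemma place_value_dvd r s : r <= s -> P r %| P s.
Proof. by move=> r_le_s; rewrite /P -(subnKC r_le_s) takeD big_cat dvdn_mulr. Qed.

Lemma place_value_dvd_prod r : P r %| n.
Proof. by rewrite /P -{2}(cat_take_drop r ns) big_cat dvdn_mulr. Qed.

Lemma place_value_size : P (size ns) = n.
Proof. by rewrite /P take_size. Qed.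

Lemma digitE r j : digit r j = j %/ P r %% N r.
Proof. by []. Qed.

Lemma digit_lt_radix r j : digit r j < N r.
Proof. by rewrite digitE ltn_mod radix_gt0. Qed.

Lemma digit_modE r j : digit r j = j %% P r.+1 %/ P r.
Proof. by rewrite digitE modn_divl mulnC -place_valueS. Qed.

Lemma modn_place_valueS r j : j %% P r.+1 = j %% P r + P r * digit r j.
Proof.
rewrite digit_modE -(modn_dvdm j (place_value_dvd (leqnSn r))).
by rewrite [P r * _]mulnC addnC -divn_eq.
Qed.

Lemma place_value_decomp r j : j = j %% P r + P r * digit r j + P r.+1 * (j %/ P r.+1).
Proof. by rewrite -modn_place_valueS addnC mulnC -divn_eq. Qed.

Lemma radix_parts r a d q : a < P r -> d < N r ->
  let j := a + P r * d + P r.+1 * q in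
  [/\ j %% P r = a, digit r j = d & j %/ P r.+1 = q].
Proof.
move=> a_lt d_lt j.
have j_eq : j = (q * N r + d) * P r + a by rewrite /j place_valueS; ring.
have div_j : j %/ P r = q * N r + d.
  by rewrite j_eq divnMDl ?place_value_gt0 // divn_small ?addn0.
split.
- by rewrite j_eq modnMDl modn_small.
- by rewrite digitE div_j modnMDl modn_small.
- by rewrite place_valueS divnMA div_j divnMDl ?radix_gt0 // divn_small ?addn0.
Qed.

Definition digit_succ r j :=
  j %% P r + P r * ((digit r j).+1 %% N r) + P r.+1 * (j %/ P r.+1).

Lemma digit_succ_parts r j :
  [/\ digit_succ r j %% P r = j %% P r,
      digit r (digit_succ r j) = (digit r j).+1 %% N r
    & digit_succ r j %/ P r.+1 = j %/ P r.+1].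
Proof. by apply: radix_parts; rewrite ltn_mod ?place_value_gt0 ?radix_gt0. Qed.

Lemma digit_succ_other r s j : s != r -> digit s (digit_succ r j) = digit s j.
Proof.
have [Pmod _ Pdiv] := digit_succ_parts r j.
case: ltngtP => // [s_lt_r|r_lt_s] _.
  have dvd_Ps : P s.+1 %| P r by apply: place_value_dvd.
  by rewrite !digit_modE -(modn_dvdm (digit_succ r j) dvd_Ps) Pmod modn_dvdm.
have dvd_Pr : P r.+1 %| P s by apply: place_value_dvd.
by rewrite !digitE -(divnK dvd_Pr) mulnC !divnMA Pdiv.
Qed.

Lemma digit_succ_inj r : injective (digit_succ r).
Proof.
move=> j j' eq_succ.
have [Pmod Pdigit Pdiv] := digit_succ_parts r j.
have [Pmod' Pdigit' Pdiv'] := digit_succ_parts r j'.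
rewrite eq_succ {}Pmod' {}Pdigit' {}Pdiv' in Pmod Pdigit Pdiv.
have digit_eq : digit r j' = digit r j.
  move/eqP: Pdigit; rewrite -(add1n (digit r j)) -(add1n (digit r j')) eqn_modDl.
  by rewrite !modn_small ?digit_lt_radix // => /eqP.
by rewrite (place_value_decomp r j) (place_value_decomp r j') Pmod Pdiv digit_eq.
Qed.

Lemma digit_succ_lt r j : (digit_succ r j < n) = (j < n).
Proof.
have [_ _ Pdiv] := digit_succ_parts r j.
by rewrite -(divnK (place_value_dvd_prod r.+1)) -!ltn_divLR ?place_value_gt0 ?Pdiv.
Qed.

Lemma digits_eq0 j : j < n -> (forall r, r < size ns -> digit r j = 0) -> j = 0.
Proof.
move=> j_lt digits0.
suff mod0 : forall r, r <= size ns -> j %% P r = 0.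
  by rewrite -(modn_small j_lt) -place_value_size mod0.
elim=> [|r IH] r_le; first by rewrite /P take0 big_nil modn1.
by rewrite modn_place_valueS (IH (ltnW r_le)) digits0 ?muln0.
Qed.

Definition digit_succ_ord r (k : 'I_n) : 'I_n :=
  Ordinal (etrans (digit_succ_lt r k) (ltn_ord k)).

Lemma digit_succ_ord_inj r : injective (digit_succ_ord r).
Proof. by move=> k k' /(congr1 val) /= /digit_succ_inj /val_inj. Qed.

Definition digit_succ_perm r : 'S_n := perm (@digit_succ_ord_inj r).

Lemma digit_succ_permE r k : val (digit_succ_perm r k) = digit_succ r k.
Proof. by rewrite permE. Qed.

End MixedRadix.

Section SuppressionLaw.
Variable R : realType.
Variable ns : seq nat.
Hypothesis ns_ge2 : all (fun m => (2 <= m)%N) ns.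
Local Notation n := (\prod_(m <- ns) m)%N.
Local Notation U := (fourier_tensor R ns).

Lemma fourier_tensor_digit_succ r j k : (r < size ns)%N ->
  U j (digit_succ ns r k) = U j k * expi_frac R (radix ns r) (digit ns r j).
Proof.
move=> r_lt; rewrite /fourier_tensor (bigD1 (Ordinal r_lt)) //.
rewrite [in RHS](bigD1 (Ordinal r_lt)) // [in RHS]mulrAC.
have [_ -> _] := digit_succ_parts ns_ge2 r k.
rewrite fourier_succ_mod ?radix_gt0 //=; congr (_ * _).
by apply: eq_bigr => s s_neq_r; rewrite digit_succ_other.
Qed.

Lemma fourier_tensor_suppression (f : 'I_n -> nat) r : (r < size ns)%N ->
  rows_permanent U f != 0 -> (radix ns r %| \sum_(k < n) digit ns r (f k))%N.
Proof.
move=> r_lt perm_neq0.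
have twist k j : U (f k) (digit_succ_perm ns_ge2 r j)
    = U (f k) j * expi_frac R (radix ns r) (digit ns r (f k)).
  by rewrite digit_succ_permE fourier_tensor_digit_succ.
move: (rows_permanent_twist twist perm_neq0); rewrite expi_frac_sum.
by apply: expi_frac_eq1; apply: radix_gt0.
Qed.

End SuppressionLaw.

Section LossWeights.
Variables (R : realType) (n : nat) (Lam : R).

Definition loss_weight (b : {ffun 'I_n -> bool}) : R :=
  \prod_(k < n) (if b k then Lam else 1 - Lam).

Lemma loss_weight_ge0 b : 0 <= Lam <= 1 -> 0 <= loss_weight b.
Proof. by move=> /andP[? ?]; apply: prodr_ge0 => k _; case: (b k); lra. Qed.

Lemma sum_loss_weight_kept (Q : pred 'I_n) :
  \sum_(b : {ffun 'I_n -> bool}) loss_weight b * [forall k, Q k ==> ~~ b k]%:R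
  = (1 - Lam) ^+ #|[set k | Q k]|.
Proof.
pose w k (x : bool) : R := (if x then Lam else 1 - Lam) * (Q k ==> ~~ x)%:R.
have term b : loss_weight b * [forall k, Q k ==> ~~ b k]%:R = \prod_(k < n) w k (b k).
  rewrite big_split /=; congr (_ * _).
  case: (boolP [forall k, _]) => [/forallP kept | /forallPn [k lost_k]].
    by rewrite big1 // => k _; rewrite kept.
  by rewrite (bigD1 k) //= (negbTE lost_k) mul0r.
under eq_bigr => b _ do rewrite term.
rewrite -(bigA_distr_bigA w) cardsE -prodr_const [RHS]big_mkcond /=.
by apply: eq_bigr => k _; rewrite big_bool /w unfold_in; case: (Q k) => /=; ring.
Qed.

End LossWeights.

Section DetectionPatterns.
Variables (R : realType) (U : nat -> nat -> complex R) (n : nat).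
Implicit Types (o : {ffun 'I_n -> 'I_n}) (b : {ffun 'I_n -> bool}).
Local Open Scope nat_scope.

Definition kept_outside0 o b := [forall k, (nat_of_ord (o k) != 0) ==> ~~ b k].

Lemma sum_card_fibers o (P : pred 'I_n) (h : nat -> nat) :
  \sum_(1 <= i < n) #|[set k | (nat_of_ord (o k) == i) && P k]| * h i
  = \sum_(k < n) ((nat_of_ord (o k) != 0) && P k) * h (o k).
Proof.
under eq_bigr => i _ do rewrite -sum1dep_card big_distrl big_mkcond /=.
rewrite exchange_big /=; apply: eq_bigr => k _.
rewrite -big_mkcond; under eq_bigl => i do rewrite andbC eq_sym.
by rewrite big_nat1_cond_eq ltn_ord andbT lt0n mul1n; case: (_ && P k); rewrite ?mul1n.
Qed.

Lemma card_set_sum (Q : pred 'I_n) : #|[set k | Q k]| = \sum_(k < n) Q k.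
Proof. by rewrite -sum1dep_card big_mkcond. Qed.

Lemma sum_count_nonzero o :
  \sum_(1 <= j < n) Defs.count o j = #|[set k | nat_of_ord (o k) != 0]|.
Proof.
transitivity (\sum_(1 <= i < n) #|[set k | (nat_of_ord (o k) == i) && predT k]| * 1).
  by apply: eq_bigr => i _; rewrite muln1; apply: eq_card => k; rewrite !inE andbT.
by rewrite sum_card_fibers card_set_sum; apply: eq_bigr => k _; rewrite andbT muln1.
Qed.

Lemma sum_lossy_pattern o b (h : nat -> nat) : 0 < n ->
  \sum_(i < n) lossy_pattern o b i * h i
  = h 0 + \sum_(k < n) ((nat_of_ord (o k) != 0) && ~~ b k) * h (o k).
Proof.
move=> n_gt0; rewrite -(big_mkord xpredT (fun i => lossy_pattern o b i * h i)).
rewrite big_ltn // mul1n -sum_card_fibers; congr (_ + _).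
by apply: eq_big_nat => i /andP[i_gt0 _]; rewrite /lossy_pattern gtn_eqF.
Qed.

Lemma lossless_ideal_card o :
  ideal U n (lossless_pattern o) -> #|[set k | nat_of_ord (o k) != 0]| = n.-1.
Proof.
case=> _ [+ _]; rewrite /lossless_pattern /= sum_count_nonzero.
have : #|[set k | nat_of_ord (o k) != 0]| <= n by rewrite -[n in _ <= n]card_ord max_card.
set X := #|[set k | _]|; lia.
Qed.

Lemma lossy_ideal_card o b : 0 < n -> ideal U n (lossy_pattern o b) ->
  #|[set k | (nat_of_ord (o k) != 0) && ~~ b k]| = n.-1.
Proof.
move=> n_gt0 [sum_n _]; rewrite card_set_sum.
have := sum_lossy_pattern o b (fun=> 1) n_gt0.
rewrite (eq_bigr _ (fun i _ => muln1 _)) sum_n (eq_bigr _ (fun k _ => muln1 _)).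
by move/(congr1 predn); rewrite add1n => ->.
Qed.

Lemma card_kept_lossless o b : kept_outside0 o b ->
  #|[set k | (nat_of_ord (o k) != 0) && ~~ b k]| = #|[set k | nat_of_ord (o k) != 0]|.
Proof.
move=> /forallP kept; apply: eq_card => k; rewrite !inE.
by case: (_ != 0) (kept k) => //= ->.
Qed.

Lemma kept_ideal_iff o b : 0 < n -> kept_outside0 o b ->
  ideal U n (lossy_pattern o b) <-> ideal U n (lossless_pattern o).
Proof.
move=> n_gt0 kept.
have patterns_eq : #|[set k | nat_of_ord (o k) != 0]| = n.-1 ->
    lossy_pattern o b = lossless_pattern o.
  move=> card_nz; apply: funext => j.
  rewrite /lossy_pattern /lossless_pattern sum_count_nonzero card_nz.
  case: eqP => [_|/eqP j_neq0]; first lia.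
  apply: eq_card => k; rewrite !inE; case: eqP => //= ok_j.
  by move/forallP: kept => /(_ k); rewrite ok_j j_neq0.
split=> ideal_pat.
  by rewrite -patterns_eq // -(card_kept_lossless kept) lossy_ideal_card.
by rewrite patterns_eq // lossless_ideal_card.
Qed.

Lemma lossy_ideal_lost_one o b k1 : 0 < n -> ideal U n (lossy_pattern o b) ->
  b k1 -> forall k, k != k1 -> (nat_of_ord (o k) != 0) && ~~ b k.
Proof.
move=> n_gt0 ideal_lossy lost1.
have sub1 : [set k | (nat_of_ord (o k) != 0) && ~~ b k] \subset [set~ k1].
  by apply/fintype.subsetP => k; rewrite !inE; apply: contraTneq => ->; rewrite lost1 andbF.
have := subset_cardP _ sub1; rewrite lossy_ideal_card // cardsC1 card_ord.
by move=> /(_ erefl) eq1 k k_neq1; have := eq1 k; rewrite !inE k_neq1 => ->.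
Qed.

Lemma sum_mode_seq (s : nat -> nat) (h : nat -> nat) : \sum_(i < n) s i = n ->
  \sum_(k < n) h (nth 0 (mode_seq n s) k) = \sum_(i < n) s i * h i.
Proof.
have sum_seq g : \sum_(x <- mode_seq n s) g x = \sum_(i < n) s i * g i.
  rewrite big_flatten big_map -(big_mkord xpredT (fun i => s i * g i)) /index_iota subn0.
  by apply: eq_bigr => i _; rewrite big_nseq iter_addn_0 mulnC.
move=> sum_n; have size_n : size (mode_seq n s) = n.
  by rewrite -sum1_size sum_seq (eq_bigr _ (fun i _ => muln1 _)).
by rewrite -sum_seq (big_nth 0) size_n big_mkord.
Qed.

Lemma lossy_ideal_mode_sum o b k1 (h : nat -> nat) : 0 < n -> h 0 = 0 ->
  ideal U n (lossy_pattern o b) -> b k1 ->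
  \sum_(k < n) h (nth 0 (mode_seq n (lossy_pattern o b)) k) = \sum_(k < n | k != k1) h (o k).
Proof.
move=> n_gt0 h0 ideal_lossy lost1; have [sum_n _] := ideal_lossy.
rewrite sum_mode_seq // sum_lossy_pattern // h0 add0n (bigD1 k1) //= lost1 andbF mul0n add0n.
apply: eq_bigr => k k_neq1.
by rewrite (lossy_ideal_lost_one n_gt0 ideal_lossy lost1 k_neq1) mul1n.
Qed.

End DetectionPatterns.

Definition pure_heralds_kept (R : realType) (U : nat -> nat -> complex R) n K :=
  forall (c t : {ffun 'I_n -> 'I_K}) o b, (forall i j, c i = c j) ->
    out_amp U c o t != 0 -> ideal U n (lossy_pattern o b) -> kept_outside0 o b.

Section Heralding.
Variables (R : realType) (M : noise_model) (U : nat -> nat -> complex R) (n : nat) (Lam : R).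
Hypotheses (n_gt0 : (0 < n)%N) (Lam01 : 0 <= Lam <= 1).
Implicit Types (o : {ffun 'I_n -> 'I_n}) (b : {ffun 'I_n -> bool}).

Lemma indicatorE (P : Prop) : indicator R P = `[< P >]%:R.
Proof. by rewrite /indicator; case: `[< P >]. Qed.

Lemma sqmod_ge0 (z : complex R) : 0 <= sqmod z.
Proof. by rewrite addr_ge0 ?sqr_ge0. Qed.

Lemma label_prob_ge0 eps i l : 0 <= eps <= 1 -> 0 <= label_prob M eps i l :> R.
Proof.
move=> /andP[eps_ge0 eps_le1]; rewrite /label_prob.
by case: M => [r|]; repeat case: ifP => _; rewrite ?divr_ge0 //; lra.
Qed.

Lemma config_prob_ge0 eps c : 0 <= eps <= 1 -> 0 <= @config_prob R M n eps c.
Proof. by move=> eps01; apply: prodr_ge0 => i _; apply: label_prob_ge0. Qed.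

Lemma label_prob0 i l : l != 0%N -> label_prob M 0 i l = 0 :> R.
Proof.
by move/negbTE=> l_neq0; case: M => [r|]; rewrite /label_prob l_neq0 ?mul0r; case: ifP.
Qed.

Lemma indicator_lossy_ge o b :
  (kept_outside0 o b)%:R * indicator R (ideal U n (lossless_pattern o))
  <= indicator R (ideal U n (lossy_pattern o b)).
Proof.
rewrite !indicatorE; case: (boolP (kept_outside0 o b)) => [kept|_]; last by rewrite mul0r.
by rewrite mul1r (asbool_equiv_eq (kept_ideal_iff U n_gt0 kept)).
Qed.

Lemma indicator_lossy_eq o b : (ideal U n (lossy_pattern o b) -> kept_outside0 o b) ->
  indicator R (ideal U n (lossy_pattern o b))
  = (kept_outside0 o b)%:R * indicator R (ideal U n (lossless_pattern o)).
Proof.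
move=> lossy_kept; rewrite !indicatorE.
case: (boolP (kept_outside0 o b)) => [kept|not_kept].
  by rewrite mul1r (asbool_equiv_eq (kept_ideal_iff U n_gt0 kept)).
by rewrite mul0r asboolF // => /lossy_kept; apply/negP.
Qed.

Lemma sum_loss_weight_kept_ideal o :
  \sum_b loss_weight Lam b
          * ((kept_outside0 o b)%:R * indicator R (ideal U n (lossless_pattern o)))
  = (1 - Lam) ^+ n.-1 * indicator R (ideal U n (lossless_pattern o)).
Proof.
under eq_bigr => b _ do rewrite mulrA.
rewrite -mulr_suml sum_loss_weight_kept indicatorE.
by case: asboolP => [/lossless_ideal_card ->|_]; rewrite ?mulr0.
Qed.

Lemma herald_lossy_ge eps : 0 <= eps <= 1 ->
  (1 - Lam) ^+ n.-1 * herald_lossless M U n eps <= herald_lossy M U n eps Lam.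
Proof.
move=> eps01; rewrite /herald_lossy /herald_lossless mulr_sumr; apply: ler_sum => c _.
rewrite mulrCA ler_wpM2l ?config_prob_ge0 // mulr_sumr; apply: ler_sum => o _.
rewrite mulr_sumr; apply: ler_sum => t _; rewrite mulrCA ler_wpM2l ?sqmod_ge0 //.
rewrite -sum_loss_weight_kept_ideal; apply: ler_sum => b _.
by rewrite ler_wpM2l ?loss_weight_ge0 ?indicator_lossy_ge.
Qed.

Lemma herald_lossy_eq0 : pure_heralds_kept U n (nlabels M n) ->
  herald_lossy M U n 0 Lam = (1 - Lam) ^+ n.-1 * herald_lossless M U n 0.
Proof.
move=> lossy_kept; rewrite /herald_lossy /herald_lossless mulr_sumr.
apply: eq_bigr => c _; rewrite mulrCA.
case: (boolP [forall i, nat_of_ord (c i) == 0%N]) => [/forallP c0|/forallPn[i ci_neq0]];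
  last by rewrite /config_prob (bigD1 i) //= label_prob0 ?mul0r.
have c_same i j : c i = c j by apply: ord_inj; rewrite (eqP (c0 i)) (eqP (c0 j)).
congr (_ * _); rewrite mulr_sumr; apply: eq_bigr => o _.
rewrite mulr_sumr; apply: eq_bigr => t _; rewrite mulrCA.
have [->|amp_neq0] := eqVneq (out_amp U c o t) 0.
  by rewrite /sqmod /= expr0n addr0 !mul0r.
congr (_ * _); rewrite -sum_loss_weight_kept_ideal; apply: eq_bigr => b _.
by rewrite indicator_lossy_eq // => /(lossy_kept c t o b c_same amp_neq0).
Qed.

End Heralding.

Lemma pure_out_amp_permanent_neq0 (R : realType) (U : nat -> nat -> complex R) K n
    (c t : {ffun 'I_n -> 'I_K}) (o : {ffun 'I_n -> 'I_n}) :
  (forall i j, c i = c j) -> out_amp U c o t != 0 ->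
  rows_permanent U (fun k => nat_of_ord (o k)) != 0.
Proof.
move=> c_same; apply: contra; rewrite /rows_permanent /= => /eqP perm0; rewrite /out_amp.
rewrite (eq_bigr (fun p : 'S_n =>
    (\prod_(k < n) U (o k) (p k)) * \prod_(k < n) (if t k == c k then 1 else 0))).
  by rewrite -mulr_suml perm0 !mul0r.
by move=> p _; rewrite -big_split; apply: eq_bigr => k _; rewrite (c_same (p k) k).
Qed.

Lemma fock_amp_permanent_neq0 (R : realType) (U : nat -> nat -> complex R) n s :
  fock_amp U n s != 0 -> rows_permanent U (fun k : 'I_n => nth 0%N (mode_seq n s) k) != 0.
Proof.
by apply: contra; rewrite /rows_permanent => /eqP perm0; rewrite /fock_amp perm0 mul0r.
Qed.

Section FourierLossFree.
Variable R : realType.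
Variable ns : seq nat.
Hypothesis ns_ge2 : all (fun m => (2 <= m)%N) ns.
Local Notation n := (\prod_(m <- ns) m)%N.
Local Notation U := (fourier_tensor R ns).

Lemma fourier_tensor_pure_heralds_kept K : pure_heralds_kept U n K.
Proof.
move=> c t o b c_same amp_neq0 ideal_lossy.
have n_gt0 : (0 < n)%N by rewrite -place_value_size place_value_gt0.
apply/forallP => k1; apply/implyP => ok1_neq0; apply/negP => lost1.
suff digits0 : forall r, (r < size ns)%N -> digit ns r (o k1) = 0%N.
  by move: ok1_neq0; rewrite (digits_eq0 (ltn_ord _) digits0).
move=> r r_lt; have [_ [_ /eqP fock_neq0]] := ideal_lossy.
have := fourier_tensor_suppression ns_ge2 r_lt (fock_amp_permanent_neq0 fock_neq0).
rewrite (lossy_ideal_mode_sum n_gt0 _ ideal_lossy lost1); last by rewrite /digit div0n mod0n.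
move=> dvd_rest.
have := fourier_tensor_suppression ns_ge2 r_lt (pure_out_amp_permanent_neq0 c_same amp_neq0).
rewrite (bigD1 k1) //= (dvdn_addl _ dvd_rest) /dvdn modn_small ?digit_lt_radix //.
by move/eqP.
Qed.

End FourierLossFree.

Lemma exprn_powR (R : realType) (a x : R) m : (a `^ x) ^+ m = a `^ (m%:R * x).
Proof. by rewrite -powR_mulrn ?powR_ge0 // -powRrM mulrC. Qed.

Lemma powR_le1 (R : realType) (a x : R) : 0 <= a <= 1 -> 0 <= x -> a `^ x <= 1.
Proof.
move=> /andP[a_ge0 a_le1] x_ge0; apply: (@le_trans _ _ (1 `^ x)); last by rewrite powR1.
by apply: ge0_ler_powR; rewrite ?nnegrE.
Qed.

Theorem theorem7 (R : realType) (M : noise_model) (ns : seq nat) (eps lam : R) :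
  (forall r, M = URS r -> (1 <= r)%N) ->
  all (fun m => (2 <= m)%N) ns ->
  (2 < \prod_(m <- ns) m)%N ->
  0 <= eps <= 1 -> 0 <= lam <= 1 ->
  let n := (\prod_(m <- ns) m)%N in
  let U := fourier_tensor R ns in
  let Lam := 1 - (1 - lam) `^ (log2 n%:R) in
  [/\ herald_lossy M U n eps Lam >= (1 - Lam) ^+ (n - 1) * herald_lossless M U n eps,
      (1 - Lam) ^+ (n - 1) * herald_lossless M U n eps
        = (1 - lam) `^ ((n - 1)%:R * log2 n%:R) * herald_lossless M U n eps,
      herald_lossy M U n 0 Lam = (1 - Lam) ^+ (n - 1) * herald_lossless M U n 0
    & (1 - Lam) ^+ (n - 1) * herald_lossless M U n 0
        = (1 - lam) `^ ((n - 1)%:R * log2 n%:R) * herald_lossless M U n 0].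
Proof.
move=> _ ns_ge2 n_gt2 eps01 lam01 n U Lam.
have n_gt0 : (0 < n)%N by apply: ltn_trans n_gt2.
have log2_ge0 : 0 <= log2 (n%:R : R) by rewrite divr_ge0 ?ln_ge0 ?ler1n.
have Lam_pow : 1 - Lam = (1 - lam) `^ log2 n%:R by rewrite /Lam opprB addrC subrK.
have Lam01 : 0 <= Lam <= 1.
  have base01 : 0 <= 1 - lam <= 1 by lra.
  have := powR_le1 base01 log2_ge0; have := powR_ge0 (1 - lam) (log2 n%:R).
  rewrite /Lam; lra.
have pow_eq : (1 - Lam) ^+ (n - 1) = (1 - lam) `^ ((n - 1)%:R * log2 n%:R).
  by rewrite Lam_pow exprn_powR.
split; [|by rewrite pow_eq| |by rewrite pow_eq]; rewrite subn1.
- exact: herald_lossy_ge.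
- exact/herald_lossy_eq0/fourier_tensor_pure_heralds_kept.
Qed.
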